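(* A deformation $\mathbf{y}\in H^1(\Omega;\mathbb{R}^3)$ satisfies $\nabla\mathbf{y}^T\nabla\mathbf{y}=g$ a.e. in $\Omega$ (i.e. $\mathbf{y}$ is an isometric immersion of $g$), where $$g=\lambda^2\,\mathbf{m}\otimes\mathbf{m}+\lambda^{-1}\,\mathbf{m}_\perp\otimes\mathbf{m}_\perp,$$ if and only if $\mathbf{y}$ is a global minimizer of $E_{str}$ over $H^1(\Omega;\mathbb{R}^3)$ with $E_{str}[\mathbf{y}]=0$.
   Context: Let $\Omega\subset\mathbb{R}^2$ be a bounded Lipschitz domain, $s,s_0\in L^\infty(\Omega)$ with $-1<s,s_0$ in $\Omega$, $\lambda=\big(\tfrac{s+1}{s_0+1}\big)^{1/3}$, $\mathbf{m}:\Omega\to\mathbb{S}^1$ the blueprinted director field and $\mathbf{m}_\perp:\Omega\to\mathbb{S}^1$ a field perpendicular to $\mathbf{m}$ everywhere. For $\mathbf{x}'\in\Omega$ and $\mathbf{F}\in\mathbb{R}^{3\times2}$ of rank 2, let $\mathrm{I}(\mathbf{F})=\mathbf{F}^T\mathbf{F}$, $J(\mathbf{F})=\det\mathrm{I}(\mathbf{F})$, $C_{\mathbf{m}}(\mathbf{F})=\mathbf{m}(\mathbf{x}')\cdot\mathrm{I}(\mathbf{F})\mathbf{m}(\mathbf{x}')$, and $$W_{str}(\mathbf{x}',\mathbf{F})=\lambda\Big[\frac{1}{J(\mathbf{F})}+\frac{1}{s+1}\Big(\operatorname{tr}\mathrm{I}(\mathbf{F})+s_0\,C_{\mathbf{m}}(\mathbf{F})+s\,\frac{J(\mathbf{F})}{C_{\mathbf{m}}(\mathbf{F})}\Big)\Big]-3,$$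 with $s,s_0,\lambda$ evaluated at $\mathbf{x}'$. The stretching energy is $E_{str}[\mathbf{y}]=\int_\Omega W_{str}(\mathbf{x}',\nabla\mathbf{y}(\mathbf{x}'))\,d\mathbf{x}'$ for $\mathbf{y}\in H^1(\Omega;\mathbb{R}^3)$. *)

From HB Require Import structures.
From mathcomp Require Import all_boot all_order all_algebra.
From mathcomp Require Import all_classical all_reals all_analysis.
Set Implicit Arguments. Unset Strict Implicit. Unset Printing Implicit Defensive.
Import Order.TTheory GRing.Theory Num.Theory.
Import numFieldNormedType.Exports.
Local Open Scope classical_set_scope.
Local Open Scope ring_scope.

Definition leb2 (R : realType) := ((@lebesgue_measure R) \x (@lebesgue_measure R))%E.
Arguments leb2 : clear implicits.

(** Bounded Lipschitz domain in R^2: open, connected, bounded, and near every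
    boundary point, in suitable rotated coordinates, the domain is the
    (strict) supergraph of a Lipschitz function inside a box. *)
Definition lipschitz_fun (R : realType) (f : R -> R) :=
  exists L : R, forall a b, `|f a - f b| <= L * `|a - b|.

Definition loc_u (R : realType) (th : R) (p q : R * R) : R :=
  cos th * (q.1 - p.1) + sin th * (q.2 - p.2).
Definition loc_v (R : realType) (th : R) (p q : R * R) : R :=
  - sin th * (q.1 - p.1) + cos th * (q.2 - p.2).

Definition bounded_lipschitz_domain (R : realType) (O : set (R * R)) :=
  [/\ open O, connected O, O !=set0,
      (exists M : R, forall p, O p -> `|p.1| <= M /\ `|p.2| <= M) &
      forall p, closure O p -> ~ O p ->
        exists (th r h : R) (f : R -> R),
          [/\ 0 < r /\ 0 < h, lipschitz_fun f, f 0 = 0,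
              (forall u, `|u| < r -> `|f u| < h / 2) &
              forall q, `|loc_u th p q| < r -> `|loc_v th p q| < h ->
                (O q <-> f (loc_u th p q) < loc_v th p q)]].

Definition Linfty (R : realType) (O : set (R * R)) (f : R * R -> R) :=
  measurable_fun O f /\
  exists M : R, {ae leb2 R, forall x, O x -> `|f x| <= M}.

Definition L2 (R : realType) (O : set (R * R)) (f : R * R -> R) :=
  measurable_fun O f /\
  (\int[leb2 R]_(x in O) (((f x) ^+ 2)%:E) < +oo)%E.

Definition pderiv (R : realType) (b : bool) (phi : R * R -> R) : R * R -> R :=
  fun p => if b then derive1 (fun t => phi (p.1, t)) p.2
           else derive1 (fun t => phi (t, p.2)) p.1.

Definition iter_pderiv (R : realType) (s : seq bool) (phi : R * R -> R) :=
  foldr (fun b g => pderiv b g) phi s.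

Definition smooth2 (R : realType) (phi : R * R -> R) :=
  forall s : seq bool,
    continuous (iter_pderiv s phi) /\
    forall p : R * R,
      derivable (fun t => iter_pderiv s phi (t, p.2)) p.1 1 /\
      derivable (fun t => iter_pderiv s phi (p.1, t)) p.2 1.

Definition test_fun (R : realType) (O : set (R * R)) (phi : R * R -> R) :=
  smooth2 phi /\
  exists K : set (R * R), [/\ compact K, K `<=` O &
                              forall p, ~ K p -> phi p = 0].

Definition weak_gradient (R : realType) (O : set (R * R))
    (y : R * R -> 'cV[R]_3) (G : R * R -> 'M[R]_(3, 2)) :=
  forall (i : 'I_3) (j : 'I_2) (phi : R * R -> R), test_fun O phi ->
    (\int[leb2 R]_(x in O) ((y x i 0 * pderiv (j == 1 :> nat) phi x)%:E)
     = - \int[leb2 R]_(x in O) ((G x i j * phi x)%:E))%E.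

Definition H1_with_grad (R : realType) (O : set (R * R))
    (y : R * R -> 'cV[R]_3) (G : R * R -> 'M[R]_(3, 2)) :=
  [/\ forall i : 'I_3, L2 O (fun x => y x i 0),
      forall (i : 'I_3) (j : 'I_2), L2 O (fun x => G x i j) &
      weak_gradient O y G].

Definition fundI (R : realType) (F : 'M[R]_(3, 2)) : 'M[R]_2 := F^T *m F.
Definition Jac (R : realType) (F : 'M[R]_(3, 2)) : R := \det (fundI F).
Definition Cm (R : realType) (m : 'cV[R]_2) (F : 'M[R]_(3, 2)) : R :=
  (m^T *m fundI F *m m) 0 0.

Definition lam (R : realType) (s s0 : R) : R :=
  powR ((s + 1) / (s0 + 1)) (3%:R^-1).

(** Stretching energy density; F of rank 2 iff Jac F > 0. For F of rank < 2
    the density (which contains 1/J) is taken to be +oo. *)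
Definition Wstr (R : realType) (s s0 : R * R -> R) (m : R * R -> 'cV[R]_2)
    (x : R * R) (F : 'M[R]_(3, 2)) : \bar R :=
  if 0 < Jac F then
    (lam (s x) (s0 x) *
       ((Jac F)^-1 + (s x + 1)^-1 *
          (\tr (fundI F) + s0 x * Cm (m x) F + s x * (Jac F / Cm (m x) F)))
     - 3%:R)%:E
  else +oo%E.

Definition Estr (R : realType) (O : set (R * R)) (s s0 : R * R -> R)
    (m : R * R -> 'cV[R]_2) (G : R * R -> 'M[R]_(3, 2)) : \bar R :=
  (\int[leb2 R]_(x in O) Wstr s s0 m x (G x))%E.

Definition gmet (R : realType) (s s0 : R * R -> R) (m mp : R * R -> 'cV[R]_2)
    (x : R * R) : 'M[R]_2 :=
  (lam (s x) (s0 x)) ^+ 2 *: (m x *m (m x)^T)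
  + (lam (s x) (s0 x))^-1 *: (mp x *m (mp x)^T).

Definition unit_vec (R : realType) (v : 'cV[R]_2) := (v^T *m v) 0 0 = 1.

From mathcomp Require Import all_boot all_order all_algebra.
From mathcomp Require Import all_classical all_reals all_analysis.
From mathcomp Require Import measurable_realfun ring lra.
Import Order.TTheory GRing.Theory Num.Theory.
Import numFieldNormedType.Exports.
Local Open Scope ring_scope.

(* Write I = grad y^T grad y in the orthonormal frame (m, m_perp) as the
   symmetric matrix [[a, b], [b, c]], so that tr I = a + c, J = a c - b^2 and
   C_m = a.  With t = a / lambda^2, q = J / lambda and
   lambda^3 (s0 + 1) = s + 1 the density becomes
     W_str = (t + q t^2 + q^2 - 3 q t) / (q t) + lambda b^2 / ((s + 1) a),
   which is nonnegative by AM-GM and vanishes iff t = q = 1 and b = 0, that is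
   iff I = g.  Hence E_str >= 0 on all of H^1, and E_str[y] = 0 iff
   W_str(grad y) = 0 a.e., i.e. iff y is an isometric immersion of g. *)

(* AM-GM for t, q t^2 and q^2, whose geometric mean is q t.  As a quadratic in
   q the difference has discriminant t (t - 1)^2 (t - 4). *)
Lemma amgm3_qt {R : realFieldType} {t q : R} : 0 < t -> 0 < q ->
  3%:R * q * t <= t + q * t ^+ 2 + q ^+ 2 /\
  (t + q * t ^+ 2 + q ^+ 2 = 3%:R * q * t -> t = 1 /\ q = 1).
Proof.
move=> t0 q0; have [t_le4|t_gt4] := lerP t 4%:R; last first.
  have : 0 < q * t * (t - 3%:R) by rewrite !mulr_gt0 // subr_gt0 (lt_trans _ t_gt4) ?ltr_nat.
  by split; nra.
have sos : 4%:R * (t + q * t ^+ 2 + q ^+ 2 - 3%:R * q * t) =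
    (2%:R * q + t ^+ 2 - 3%:R * t) ^+ 2 + t * (t - 1) ^+ 2 * (4%:R - t) by ring.
have rem_ge0 : 0 <= t * (t - 1) ^+ 2 * (4%:R - t).
  by apply: mulr_ge0; [apply: mulr_ge0; [exact: ltW|exact: sqr_ge0]|lra].
have sq_ge0 := sqr_ge0 (2%:R * q + t ^+ 2 - 3%:R * t).
split=> [|eq3]; first by nra.
rewrite eq3 subrr mulr0 in sos.
have /eqP sq0 : (2%:R * q + t ^+ 2 - 3%:R * t) ^+ 2 = 0 by lra.
have /eqP : t * (t - 1) ^+ 2 * (4%:R - t) = 0 by lra.
rewrite sqrf_eq0 in sq0; rewrite !mulf_eq0 (gt_eqF t0) orbb /= !subr_eq0.
by case/orP=> [/eqP t1|/eqP t4]; move: sq0; rewrite ?t1 -?t4 => /eqP; lra.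
Qed.

(* W_str at a gradient whose I has entries a, b, c in the frame (m, m_perp),
   with L = lambda. *)
Definition stretch_density {R : fieldType} (L s s0 a b c : R) : R :=
  L * ((a * c - b ^+ 2)^-1 +
       (s + 1)^-1 * ((a + c) + s0 * a + s * ((a * c - b ^+ 2) / a))) - 3%:R.

Section StretchDensity.
Context {R : realFieldType} {L s s0 : R}.
Hypotheses (L_gt0 : 0 < L) (s1_gt0 : 0 < s + 1) (L3E : L ^+ 3 * (s0 + 1) = s + 1).

Let L_neq0 : L != 0 := lt0r_neq0 L_gt0.

Let s0E : s0 = (s + 1) / L ^+ 3 - 1.
Proof. by rewrite -L3E; field. Qed.

Lemma stretch_densityE (a b c : R) : 0 < a -> 0 < a * c - b ^+ 2 ->
  let t := a / L ^+ 2 in let q := (a * c - b ^+ 2) / L in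
  stretch_density L s s0 a b c =
    (t + q * t ^+ 2 + q ^+ 2 - 3%:R * q * t) / (q * t) + L * b ^+ 2 / ((s + 1) * a).
Proof.
move=> a_gt0 J_gt0 t q; rewrite /stretch_density /t /q s0E; field.
by rewrite !gt_eqF // ?exprn_gt0.
Qed.

Let shear_ge0 (a b : R) : 0 < a -> 0 <= L * b ^+ 2 / ((s + 1) * a).
Proof.
by move=> a_gt0; apply: divr_ge0; [exact: mulr_ge0 (ltW L_gt0) (sqr_ge0 b)|exact/ltW/mulr_gt0].
Qed.

Lemma stretch_density_ge0 {a b c : R} : 0 < a -> 0 < a * c - b ^+ 2 ->
  0 <= stretch_density L s s0 a b c.
Proof.
move=> a_gt0 J_gt0; rewrite stretch_densityE //.
have t_gt0 : 0 < a / L ^+ 2 by rewrite divr_gt0 ?exprn_gt0.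
have q_gt0 : 0 < (a * c - b ^+ 2) / L by rewrite divr_gt0.
have [core_ge0 _] := amgm3_qt t_gt0 q_gt0.
by rewrite addr_ge0 ?shear_ge0 // divr_ge0 ?subr_ge0 // ltW // mulr_gt0.
Qed.

Lemma stretch_density_eq0 {a b c : R} : 0 < a -> 0 < a * c - b ^+ 2 ->
  stretch_density L s s0 a b c = 0 <-> [/\ a = L ^+ 2, b = 0 & c = L^-1].
Proof.
move=> a_gt0 J_gt0; split; last first.
  by case=> -> -> ->; rewrite /stretch_density s0E; field; rewrite !gt_eqF // ?exprn_gt0.
rewrite stretch_densityE //.
set t := a / L ^+ 2; set q := (a * c - b ^+ 2) / L.
have t_gt0 : 0 < t by rewrite divr_gt0 ?exprn_gt0.
have q_gt0 : 0 < q by rewrite divr_gt0.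
have [core_ge0 core_eq] := amgm3_qt t_gt0 q_gt0.
have core_frac_ge0 : 0 <= (t + q * t ^+ 2 + q ^+ 2 - 3%:R * q * t) / (q * t).
  by rewrite divr_ge0 ?subr_ge0 // ltW // mulr_gt0.
move=> /eqP; rewrite paddr_eq0 ?shear_ge0 // !(mulf_eq0, invr_eq0) subr_eq0.
rewrite !(gt_eqF L_gt0, gt_eqF a_gt0, gt_eqF s1_gt0, gt_eqF J_gt0) /= !orbF orbb.
move=> /andP[/eqP/core_eq[t1 q1] /eqP b0].
have aE : a = L ^+ 2 by rewrite -[a](divfK (expf_neq0 2 L_neq0)) -/t t1 mul1r.
have JE : a * c - b ^+ 2 = L by rewrite -[LHS](divfK L_neq0) -/q q1 mul1r.
split=> //; move: JE; rewrite aE b0 expr0n subr0 => JE.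
by rewrite -[c](mulKf (expf_neq0 2 L_neq0)) JE; field.
Qed.

End StretchDensity.

Lemma lam_gt0 {R : realType} {s s0 : R} : -1 < s -> -1 < s0 -> 0 < lam s s0.
Proof. by move=> s_gt s0_gt; apply: powR_gt0; apply: divr_gt0; lra. Qed.

Lemma lam_cube {R : realType} {s s0 : R} : -1 < s -> -1 < s0 ->
  lam s s0 ^+ 3 * (s0 + 1) = s + 1.
Proof.
move=> s_gt s0_gt; have ratio_gt0 : 0 < (s + 1) / (s0 + 1) by apply: divr_gt0; lra.
rewrite /lam -powR_mulrn ?powR_ge0 // -powRrM mulVf ?pnatr_eq0 // powRr1 ?ltW //.
by rewrite mulfVK // gt_eqF //; lra.
Qed.

Section Matrix2.
Variable R : comRingType.

Lemma det_mx2 (A : 'M[R]_2) : \det A = A 0 0 * A 1 1 - A 0 1 * A 1 0.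
Proof.
rewrite (expand_det_row _ 0) big_ord_recl big_ord1 /cofactor !det_mx11 !mxE /=.
have -> : lift 0 0 = 1 :> 'I_2 by exact: val_inj.
have -> : lift 1 0 = 0 :> 'I_2 by exact: val_inj.
by rewrite expr0 expr1 /=; ring.
Qed.

Lemma block_mx11_entries (A B C D : 'M[R]_1) : let M : 'M[R]_2 := block_mx A B C D in
  [/\ M 0 0 = A 0 0, M 0 1 = B 0 0, M 1 0 = C 0 0 & M 1 1 = D 0 0].
Proof.
have -> : (0 : 'I_2) = lshift 1 (0 : 'I_1) by exact: val_inj.
have -> : (1 : 'I_2) = rshift 1 (0 : 'I_1) by exact: val_inj.
by split; [exact: block_mxEul|exact: block_mxEur|exact: block_mxEdl|exact: block_mxEdr].
Qed.

Lemma det_block_mx11 (A B C D : 'M[R]_1) :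
  \det (block_mx A B C D : 'M[R]_2) = A 0 0 * D 0 0 - B 0 0 * C 0 0.
Proof. by rewrite det_mx2; have [-> -> -> ->] := block_mx11_entries A B C D. Qed.

Lemma tr_block_mx11 (A B C D : 'M[R]_1) :
  \tr (block_mx A B C D : 'M[R]_2) = A 0 0 + D 0 0.
Proof.
rewrite /mxtrace big_ord_recl big_ord1 /=.
have -> : lift 0 0 = 1 :> 'I_2 by exact: val_inj.
by have [-> _ _ ->] := block_mx11_entries A B C D.
Qed.

Lemma eq_block_mx11 (A B C D A' B' C' D' : 'M[R]_1) :
  block_mx A B C D = block_mx A' B' C' D' :> 'M[R]_2 <->
  [/\ A 0 0 = A' 0 0, B 0 0 = B' 0 0, C 0 0 = C' 0 0 & D 0 0 = D' 0 0].
Proof.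
split=> [eqM|[eA eB eC eD]].
  by have [-> -> -> ->] := @eq_block_mx _ 1 1 1 1 _ _ _ _ _ _ _ _ eqM.
by rewrite [A]mx11_scalar [B]mx11_scalar [C]mx11_scalar [D]mx11_scalar eA eB eC eD -!mx11_scalar.
Qed.

End Matrix2.

Lemma conj_row_mx {R : pzRingType} {m n1 n2} (U : 'M[R]_(m, n1)) (V : 'M[R]_(m, n2))
    (A : 'M[R]_m) :
  (row_mx U V)^T *m A *m row_mx U V =
  block_mx (U^T *m A *m U) (U^T *m A *m V) (V^T *m A *m U) (V^T *m A *m V).
Proof. by rewrite tr_row_mx mul_col_mx mul_col_row. Qed.

Lemma row_mx_diag_conj {R : comPzRingType} {m n1 n2} (U : 'M[R]_(m, n1))
    (V : 'M[R]_(m, n2)) (a b : R) :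
  a *: (U *m U^T) + b *: (V *m V^T) =
  row_mx U V *m block_mx a%:M 0 0 b%:M *m (row_mx U V)^T.
Proof.
rewrite tr_row_mx mul_row_block !mulmx0 addr0 add0r mul_row_col.
by rewrite !mul_mx_scalar -!scalemxAl.
Qed.

Section OrthogonalConj.
Context {R : comUnitRingType} {n : nat} {Q : 'M[R]_n}.
Hypothesis QtQ : Q^T *m Q = 1%:M.

Let QQt : Q *m Q^T = 1%:M := mulmx1C QtQ.

Lemma orthogonal_conjP (A D : 'M[R]_n) : A = Q *m D *m Q^T <-> Q^T *m A *m Q = D.
Proof.
split=> [->|<-]; first by rewrite !mulmxA QtQ mul1mx -mulmxA QtQ mulmx1.
by rewrite !mulmxA QQt mul1mx -mulmxA QQt mulmx1.
Qed.

Lemma det_orthogonal_conj (A : 'M[R]_n) : \det (Q^T *m A *m Q) = \det A.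
Proof.
have detQ2 : \det Q^T * \det Q = 1 by rewrite -det_mulmx QtQ det1.
by rewrite !det_mulmx mulrAC detQ2 mul1r.
Qed.

Lemma tr_orthogonal_conj (A : 'M[R]_n) : \tr (Q^T *m A *m Q) = \tr A.
Proof. by rewrite mxtrace_mulC mulmxA QQt mul1mx. Qed.

End OrthogonalConj.

Lemma frame_orthogonal {R : realType} {u v : 'cV[R]_2} :
  unit_vec u -> unit_vec v -> (u^T *m v) 0 0 = 0 ->
  (row_mx u v)^T *m row_mx u v = 1%:M :> 'M[R]_2.
Proof.
move=> u_unit v_unit uv0.
have vu0 : (v^T *m u) 0 0 = 0 by rewrite -[v^T *m u]trmxK trmx_mul trmxK mxE.
have -> : 1%:M = block_mx 1%:M 0 0 1%:M :> 'M[R]_(1 + 1) by exact: scalar_mx_block.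
rewrite tr_row_mx mul_col_row; apply/eq_block_mx11.
by split; rewrite ?uv0 ?vu0 ?(u_unit : _ = 1) ?(v_unit : _ = 1) mxE ?mulr1n.
Qed.

Lemma fundI_sym {R : realType} (F : 'M[R]_(3, 2)) : (fundI F)^T = fundI F.
Proof. by rewrite /fundI trmx_mul trmxK. Qed.

Lemma fundI_form_ge0 {R : realType} (F : 'M[R]_(3, 2)) (u : 'cV[R]_2) :
  0 <= (u^T *m fundI F *m u) 0 0.
Proof.
have -> : u^T *m fundI F *m u = (F *m u)^T *m (F *m u) by rewrite /fundI trmx_mul !mulmxA.
by rewrite mxE; apply: sumr_ge0 => i _; rewrite !mxE -expr2 sqr_ge0.
Qed.

Lemma form_sym {R : comPzRingType} {n} (A : 'M[R]_n) (u v : 'cV[R]_n) :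
  A^T = A -> (v^T *m A *m u) 0 0 = (u^T *m A *m v) 0 0.
Proof.
move=> A_sym; have -> : v^T *m A *m u = (u^T *m A *m v)^T.
  by rewrite !trmx_mul trmxK A_sym mulmxA.
by rewrite mxE.
Qed.

Section PointwiseDensity.
Context {R : realType} {s s0 : R * R -> R} {m mp : R * R -> 'cV[R]_2} {x : R * R}.
Hypotheses (s_gt : -1 < s x) (s0_gt : -1 < s0 x).
Hypotheses (m_unit : unit_vec (m x)) (mp_unit : unit_vec (mp x)).
Hypothesis m_mp : ((m x)^T *m mp x) 0 0 = 0.
Context {F : 'M[R]_(3, 2)}.

Let L := lam (s x) (s0 x).
Let L_gt0 : 0 < L := lam_gt0 s_gt s0_gt.
Let s1_gt0 : 0 < s x + 1.
Proof. by rewrite -[1]opprK subr_gt0. Qed.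

Let Q : 'M[R]_2 := row_mx (m x) (mp x).
Let QtQ : Q^T *m Q = 1%:M := frame_orthogonal m_unit mp_unit m_mp.

Let a : R := ((m x)^T *m fundI F *m m x) 0 0.
Let b : R := ((m x)^T *m fundI F *m mp x) 0 0.
Let c : R := ((mp x)^T *m fundI F *m mp x) 0 0.

Let fundI_frameE : Q^T *m fundI F *m Q =
  block_mx ((m x)^T *m fundI F *m m x) ((m x)^T *m fundI F *m mp x)
           ((mp x)^T *m fundI F *m m x) ((mp x)^T *m fundI F *m mp x).
Proof. exact: (@conj_row_mx _ 2 1 1). Qed.

Let frame_sym : ((mp x)^T *m fundI F *m m x) 0 0 = b.
Proof. exact/form_sym/fundI_sym. Qed.

Let JacE : Jac F = a * c - b ^+ 2.
Proof.
by rewrite /Jac -(det_orthogonal_conj QtQ) fundI_frameE det_block_mx11 frame_sym expr2.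
Qed.

Let trE : \tr (fundI F) = a + c.
Proof. by rewrite -(tr_orthogonal_conj QtQ) fundI_frameE tr_block_mx11. Qed.

Let fundI_gmetP : F^T *m F = gmet s s0 m mp x <-> [/\ a = L ^+ 2, b = 0 & c = L^-1].
Proof.
rewrite /gmet row_mx_diag_conj (orthogonal_conjP QtQ) -/(fundI F) fundI_frameE.
have scalar_entry (r : R) : (r%:M : 'M[R]_1) 0 0 = r by rewrite mxE mulr1n.
have zero_entry : (0 : 'M[R]_1) 0 0 = 0 by rewrite mxE.
rewrite eq_block_mx11 frame_sym !scalar_entry zero_entry.
by split=> [[]|[]].
Qed.

Let a_gt0 : 0 < Jac F -> 0 < a.
Proof.
move=> J_gt0; rewrite lt_neqAle fundI_form_ge0 andbT; apply/eqP => a0.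
by move: J_gt0; rewrite JacE -a0 mul0r sub0r oppr_gt0 ltNge sqr_ge0.
Qed.

Lemma Wstr_ge0 : (0 <= Wstr s s0 m x F)%E.
Proof.
rewrite /Wstr; case: ifPn => // J_gt0; rewrite lee_fin.
have a_pos := a_gt0 J_gt0; rewrite JacE in J_gt0 *; rewrite trE.
exact: (stretch_density_ge0 L_gt0 s1_gt0 (lam_cube s_gt s0_gt)).
Qed.

Lemma Wstr_eq0 : Wstr s s0 m x F = 0%E <-> F^T *m F = gmet s s0 m mp x.
Proof.
rewrite fundI_gmetP /Wstr; case: ifPn => [J_gt0|].
  have a_pos := a_gt0 J_gt0; rewrite JacE in J_gt0 *; rewrite trE.
  rewrite -(stretch_density_eq0 L_gt0 s1_gt0 (lam_cube s_gt s0_gt) a_pos J_gt0).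
  split=> [[] //|stretch0].
  by rewrite -/(stretch_density L (s x) (s0 x) a b c) stretch0.
rewrite JacE -leNgt => J_le0; split=> // [[aE b0 cE]].
by move: J_le0; rewrite aE b0 cE expr0n subr0 expr2 mulfK ?lt0r_neq0 // leNgt L_gt0.
Qed.

End PointwiseDensity.

Local Open Scope classical_set_scope.

Lemma measurable_inv {R : realType} : measurable_fun [set: R] (@GRing.inv R).
Proof.
have -> : @GRing.inv R = fun x => if x == 0 then 0 else x^-1.
  by apply/funext => x; case: eqP => // ->; rewrite invr0.
apply: measurable_fun_if => //; first exact: measurable_fun_eqr.
have -> : [set: R] `&` (fun x : R => x == 0) @^-1` [set false] = [set x | x != 0].
  by apply/seteqP; split=> x /=; [case=> _ /negbT|move=> /negbTE ->].
apply: open_continuous_measurable_fun; first exact: open_neq.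
by move=> x; rewrite inE /= => x_neq0; exact: inv_continuous.
Qed.

Definition measurable_mxfun {d} {T : measurableType d} {R : realType} {m n}
    (D : set T) (A : T -> 'M[R]_(m, n)) :=
  forall i j, measurable_fun D (fun x => A x i j).

Section MeasurableMatrix.
Context {d} {T : measurableType d} {R : realType} {D : set T}.

Lemma measurable_mxfun_tr {m n} {A : T -> 'M[R]_(m, n)} :
  measurable_mxfun D A -> measurable_mxfun D (fun x => (A x)^T).
Proof. by move=> mA i j; under eq_fun do rewrite mxE; exact: mA. Qed.

Lemma measurable_mxfun_mul {m n p} {A : T -> 'M[R]_(m, n)} {B : T -> 'M[R]_(n, p)} :
  measurable_mxfun D A -> measurable_mxfun D B -> measurable_mxfun D (fun x => A x *m B x).
Proof.
move=> mA mB i j; under eq_fun do rewrite mxE.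
by apply: measurable_sum => k; exact: measurable_funM.
Qed.

Lemma measurable_det_mx2 {A : T -> 'M[R]_2} :
  measurable_mxfun D A -> measurable_fun D (fun x => \det (A x)).
Proof.
move=> mA; under eq_fun do rewrite det_mx2.
by apply: measurable_funB; apply: measurable_funM.
Qed.

Lemma measurable_trace {n} {A : T -> 'M[R]_n} :
  measurable_mxfun D A -> measurable_fun D (fun x => \tr (A x)).
Proof. by move=> mA; apply: measurable_sum => i; exact: mA. Qed.

Lemma measurable_funV {f : T -> R} :
  measurable_fun D f -> measurable_fun D (fun x => (f x)^-1).
Proof. exact: measurableT_comp measurable_inv. Qed.

End MeasurableMatrix.

Lemma measurable_Wstr {R : realType} (O : set (R * R)) (s s0 : R * R -> R)
    (m : R * R -> 'cV[R]_2) (G : R * R -> 'M[R]_(3, 2)) :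
  measurable O -> measurable_fun O s -> measurable_fun O s0 ->
  measurable_mxfun O m -> measurable_mxfun O G ->
  measurable_fun O (fun x => Wstr s s0 m x (G x)).
Proof.
move=> mO ms ms0 mm mG.
have mI : measurable_mxfun O (fun x => fundI (G x)).
  exact: measurable_mxfun_mul (measurable_mxfun_tr mG) mG.
have mJ : measurable_fun O (fun x => Jac (G x)) by exact: measurable_det_mx2.
have mC : measurable_fun O (fun x => Cm (m x) (G x)).
  exact: (measurable_mxfun_mul (measurable_mxfun_mul (measurable_mxfun_tr mm) mI) mm 0 0).
have mT : measurable_fun O (fun x => \tr (fundI (G x))) by exact: measurable_trace.
have mlam : measurable_fun O (fun x => lam (s x) (s0 x)).
  apply: measurableT_comp (measurable_powR _) _.
  by apply: measurable_funM; [|apply: measurable_funV]; apply: measurable_funD.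
apply: measurable_fun_if => //; first exact: measurable_fun_ltr.
apply: measurable_funS (@subIsetl _ _ _) _ => //; apply/measurable_EFinP.
repeat first [ assumption | exact: measurable_cst | apply: measurable_funB
  | apply: measurable_funD | apply: measurable_funM | apply: measurable_funV ].
Qed.

Lemma open_measurable2 {R : realType} {O : set (R * R)} : open O -> measurable O.
Proof.
move=> oO.
pose box (q : rat * rat * rat) : set (R * R) :=
  `]ratr q.1.1 - ratr q.2, ratr q.1.1 + ratr q.2[ `*`
  `]ratr q.1.2 - ratr q.2, ratr q.1.2 + ratr q.2[.
pose inner_box q := if `[< box q `<=` O >] then box q else set0.
have -> : O = \bigcup_q inner_box q.
  apply/seteqP; split=> [p Op|p [q _]]; last first.
    by rewrite /inner_box; case: asboolP => // boxO /boxO.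
  have /nbhs_ballP[e /= e_gt0 ballO] := oO p Op.
  have [r] : exists r : rat, (0 : R) < ratr r < e / 2%:R.
    have /rat_in_itvoo[r] : (0 : R) < e / 2%:R by rewrite divr_gt0.
    by rewrite in_itv /=; exists r.
  move=> /andP[r_gt0 r_lt].
  have /rat_in_itvoo[a] : p.1 - ratr r < p.1 + ratr r by lra.
  rewrite in_itv /= => /andP[a1 a2].
  have /rat_in_itvoo[b] : p.2 - ratr r < p.2 + ratr r by lra.
  rewrite in_itv /= => /andP[b1 b2].
  have boxO : box (a, b, r) `<=` O.
    move=> z [] /=; rewrite !in_itv /= => /andP[z1 z2] /andP[z3 z4].
    by apply: ballO; split; rewrite /ball /= ltr_distlC; apply/andP; split; lra.
  exists (a, b, r) => //; rewrite /inner_box asboolT //.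
  by split; rewrite /= in_itv /=; apply/andP; split; lra.
apply: countable_bigcupT_measurable => // q; rewrite /inner_box.
by case: ifP => _ //; apply: measurableX; exact: measurable_itv.
Qed.

Lemma ge0_integral_eq0P {d} {T : measurableType d} {R : realType}
    (mu : {measure set T -> \bar R}) {D : set T} {f : T -> \bar R} :
  measurable D -> measurable_fun D f -> (forall x, D x -> (0 <= f x)%E) ->
  (\int[mu]_(x in D) f x = 0)%E <-> ae_eq mu D f (cst 0%E).
Proof.
move=> mD mf f_ge0; rewrite -ae_eq_integral_abs //.
suff -> : (\int[mu]_(x in D) `|f x| = \int[mu]_(x in D) f x)%E by [].
by apply: eq_integral => x /[!inE] Dx; rewrite gee0_abs // f_ge0.
Qed.

Theorem corollary2p4 (R : realType) (O : set (R * R))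
    (s s0 : R * R -> R) (m mp : R * R -> 'cV[R]_2)
    (y : R * R -> 'cV[R]_3) (G : R * R -> 'M[R]_(3, 2)) :
  bounded_lipschitz_domain O ->
  Linfty O s -> Linfty O s0 ->
  (forall x, O x -> -1 < s x) -> (forall x, O x -> -1 < s0 x) ->
  (forall i : 'I_2, measurable_fun O (fun x => m x i 0)) ->
  (forall i : 'I_2, measurable_fun O (fun x => mp x i 0)) ->
  (forall x, O x -> unit_vec (m x)) ->
  (forall x, O x -> unit_vec (mp x)) ->
  (forall x, O x -> ((m x)^T *m mp x) 0 0 = 0) ->
  H1_with_grad O y G ->
  ({ae leb2 R, forall x, O x -> (G x)^T *m G x = gmet s s0 m mp x}
   <->
   (Estr O s s0 m G = 0%E /\
    forall (z : R * R -> 'cV[R]_3) (Gz : R * R -> 'M[R]_(3, 2)),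
      H1_with_grad O z Gz -> (Estr O s s0 m G <= Estr O s s0 m Gz)%E)).
Proof.
move=> [oO _ _ _ _] [ms _] [ms0 _] s_gt s0_gt mm _ m_unit mp_unit m_mp [_ G_L2 _].
have mO := open_measurable2 oO.
have mW : measurable_fun O (fun x => Wstr s s0 m x (G x)).
  apply: measurable_Wstr => // [i j|i j]; last by have [] := G_L2 i j.
  by rewrite (ord1 j).
have W_ge0 x F : O x -> (0 <= Wstr s s0 m x F)%E.
  by move=> Ox; exact: (Wstr_ge0 (s_gt x Ox) (s0_gt x Ox) (m_unit x Ox) (mp_unit x Ox) (m_mp x Ox)).
have W_eq0 x F : O x -> Wstr s s0 m x F = 0%E <-> F^T *m F = gmet s s0 m mp x.
  by move=> Ox; exact: (Wstr_eq0 (s_gt x Ox) (s0_gt x Ox) (m_unit x Ox) (mp_unit x Ox) (m_mp x Ox)).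
have E_ge0 Gz : (0 <= Estr O s s0 m Gz)%E by apply: integral_ge0 => x /W_ge0.
have E0P : Estr O s s0 m G = 0%E <-> ae_eq (leb2 R) O (fun x => Wstr s s0 m x (G x)) (cst 0%E).
  by apply: ge0_integral_eq0P => // x /W_ge0.
(* the library's [Filter] hint does not fire for the product measure *)
have ae_filter := ae_filter_ringOfSetsType (leb2 R).
split=> [ae_g|[/E0P ae_W _]].
  have E0 : Estr O s s0 m G = 0%E.
    by apply/E0P; apply: filterS ae_g => x gx Ox; apply/(W_eq0 x _ Ox)/gx.
  by split=> // z Gz _; rewrite E0.
by apply: filterS ae_W => x Wx Ox; apply/(W_eq0 x _ Ox)/Wx.
Qed.
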